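(* Let $T$ be a finite tree. Then $T$ is $\mathbb{Z}_2^2$-cordial if and only if $T$ is not isomorphic to $P_4$ or $P_5$. Equivalently: every finite tree other than $P_4$ and $P_5$ is $\mathbb{Z}_2^2$-cordial (and $P_4$, $P_5$ are not).
   Context: Graphs are finite, simple and undirected. $\mathbb{Z}_2^2=\mathbb{Z}_2\times\mathbb{Z}_2$ is the Klein four-group. For an abelian group $A$ and a graph $G=(V,E)$, a vertex labeling $\ell:V\to A$ induces an edge labeling $\ell(\{v_1,v_2\})=\ell(v_1)+\ell(v_2)$. Let $f_V(a)=|\{v\in V:\ell(v)=a\}|$ and $f_E(a)=|\{e\in E:\ell(e)=a\}|$. The labeling is $A$-cordial if $|f_V(a_1)-f_V(a_2)|\le 1$ and $|f_E(a_1)-f_E(a_2)|\le 1$ for all $a_1,a_2\in A$; $G$ is $A$-cordial if it admits an $A$-cordial labeling. $P_n$ denotes the path on $n$ vertices. *)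

From mathcomp Require Import all_boot all_algebra.
Set Implicit Arguments. Unset Strict Implicit. Unset Printing Implicit Defensive.
Import GRing.Theory.
Local Open Scope ring_scope.

(* A finite simple graph: vertex type T : finType, adjacency e : rel T,
   assumed symmetric and irreflexive. *)

Definition edges (T : finType) (e : rel T) : {set {set T}} :=
  [set E : {set T} | [exists x, exists y, e x y && (E == [set x; y])]].

Definition connected_graph (T : finType) (e : rel T) : Prop :=
  forall x y : T, connect e x y.

Definition acyclic_graph (T : finType) (e : rel T) : Prop :=
  forall s : seq T, uniq s -> (2 < size s)%N -> ~~ cycle e s.

Definition is_tree (T : finType) (e : rel T) : Prop :=
  [/\ (0 < #|T|)%N, connected_graph e & acyclic_graph e].

Definition fV (T : finType) (A : zmodType) (l : T -> A) (a : A) : nat :=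
  #|[set v : T | l v == a]|.

Definition fE (T : finType) (e : rel T) (A : zmodType) (l : T -> A) (a : A) : nat :=
  #|[set E in edges e |
      [exists x, exists y, [&& e x y, E == [set x; y] & l x + l y == a]]]|.

Definition cordial_labeling (T : finType) (e : rel T) (A : zmodType) (l : T -> A) : Prop :=
  (forall a1 a2 : A, fV l a1 <= fV l a2 + 1)%N /\
  (forall a1 a2 : A, fE e l a1 <= fE e l a2 + 1)%N.

Definition cordial (T : finType) (e : rel T) (A : zmodType) : Prop :=
  exists l : T -> A, cordial_labeling e l.

Notation Klein4 := (('Z_2 * 'Z_2)%type : zmodType).

Definition path_adj (n : nat) : rel 'I_n :=
  fun i j => ((i : nat).+1 == j) || ((j : nat).+1 == i).

Definition iso_path (T : finType) (e : rel T) (n : nat) : Prop :=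
  exists f : T -> 'I_n, bijective f /\ forall x y : T, e x y = path_adj (f x) (f y).

From mathcomp Require Import all_boot all_algebra zify.
Set Implicit Arguments. Unset Strict Implicit. Unset Printing Implicit Defensive.
Import GRing.Theory.

Definition pendant_labels (A : zmodType) (xs ys : seq A) := [seq p.1 + p.2 | p <- zip xs ys]%R.

Definition path_labels (A : zmodType) (s : seq A) := pendant_labels s (behead s).

Fixpoint seqs_over (X : Type) (xs : seq X) (n : nat) : seq (seq X) :=
  if n is n'.+1 then [seq x :: s | x <- xs, s <- seqs_over xs n'] else [:: [::]].

Lemma mem_seqs_over (X : eqType) (xs s : seq X) :
  all (mem xs) s -> s \in seqs_over xs (size s).
Proof.
elim: s => [|x s IH] //= /andP[xxs /IH sxs].
by apply/allpairsP; exists (x, s).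
Qed.

Lemma size_seqs_over (X : eqType) (xs s : seq X) n : s \in seqs_over xs n -> size s = n.
Proof.
elim: n s => [|n IH] s /=; first by rewrite inE => /eqP->.
by case/allpairsP => -[x t] /= [_ /IH <- ->].
Qed.

Definition klein4_enum : seq Klein4 := [:: (0, 0); (0, 1); (1, 0); (1, 1)]%R.

Lemma mem_klein4_enum (a : Klein4) : a \in klein4_enum.
Proof. by case: a => [[[|[|//]] ?] [[|[|//]] ?]]. Qed.

Lemma all_klein4_enum (s : seq Klein4) : all (mem klein4_enum) s.
Proof. by apply/allP => a _; apply: mem_klein4_enum. Qed.

Definition balanced (c : Klein4 -> nat) := forall a b, (c a <= c b + 1).

Definition balancedb (c : Klein4 -> nat) :=
  let cs := map c klein4_enum in all (fun m => all (fun n => m <= n + 1)%N cs) cs.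

Lemma balancedP c : reflect (balanced c) (balancedb c).
Proof.
have mem_c a : c a \in map c klein4_enum by apply/map_f/mem_klein4_enum.
apply: (iffP allP) => [bc a b | bc _ /mapP[a _ ->]].
  by have /allP := bc _ (mem_c a); apply; apply: mem_c.
by apply/allP => _ /mapP[b _ ->]; apply: bc.
Qed.

Definition count_balanced (s : seq Klein4) := balancedb (fun a => count_mem a s).

Lemma balanced_offset (c : Klein4 -> nat) m s :
  (forall a, c a = m + count_mem a s) -> count_balanced s -> balanced c.
Proof. by move=> cE /balancedP bs a b; rewrite !cE -addnA leq_add2l. Qed.

Definition klein4_subsets :=
  [seq mask m klein4_enum | m <- seqs_over [:: false; true] 4].

Lemma sum_klein4 (f : Klein4 -> nat) : \sum_a f a = \sum_(a <- klein4_enum) f a.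
Proof.
apply: perm_big; apply: uniq_perm => //; first exact: index_enum_uniq.
by move=> a; rewrite mem_index_enum mem_klein4_enum.
Qed.

Lemma balanced_decomp c : balanced c ->
  exists m, exists2 S, S \in klein4_subsets &
    size S = (\sum_a c a) %% 4 /\ forall a, c a = m + count_mem a S.
Proof.
move=> bc; case: (arg_minnP c (isT : predT (0 : Klein4)%R)) => a0 _ a0_min.
set m := c a0; pose P a := m < c a; pose S := filter P klein4_enum.
have cE a : c a = m + P a by have := a0_min a isT; have := bc a a0; rewrite /P; case: ltnP; lia.
have countS a : count_mem a S = P a.
  by rewrite count_uniq_mem ?filter_uniq // mem_filter mem_klein4_enum andbT.
exists m, S; last split; last by move=> a; rewrite countS cE.
  apply/mapP; exists (map P klein4_enum); last by rewrite /S filter_mask.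
  by apply: mem_seqs_over; apply/allP => -[] _; rewrite !inE.
have sizeS : size S < 4.
  have : has (predC P) klein4_enum by apply/hasP; exists a0; rewrite ?mem_klein4_enum //= /P ltnn.
  by rewrite has_count size_filter; have := count_predC P klein4_enum; rewrite [size _]/=; lia.
have -> : \sum_a c a = 4 * m + size S.
  by rewrite sum_klein4 !big_cons big_nil !cE size_filter /=; lia.
by rewrite mulnC modnMDl modn_small.
Qed.

Definition extendable (r nq nx : nat) (E : seq Klein4 -> seq Klein4 -> seq Klein4) :=
  all (fun Sv =>
    let X := [seq xs <- seqs_over klein4_enum nx | count_balanced (Sv ++ xs)] in
    all (fun Se => all (fun qs => has (fun xs => count_balanced (Se ++ E xs qs)) X)
                     (seqs_over klein4_enum nq))
      [seq S <- klein4_subsets | size S == (r + 3) %% 4])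
  [seq S <- klein4_subsets | size S == r].

Lemma extendableP r nq nx E (cv ce : Klein4 -> nat) :
  extendable r nq nx E -> balanced cv -> balanced ce ->
  (\sum_a cv a) %% 4 = r -> (\sum_a ce a) %% 4 = (r + 3) %% 4 ->
  forall qs, size qs = nq -> exists2 xs, size xs = nx &
    balanced (fun a => cv a + count_mem a xs) /\
    balanced (fun a => ce a + count_mem a (E xs qs)).
Proof.
move=> ok /balanced_decomp[m [Sv Sv_sub [Sv_size cvE]]].
move=> /balanced_decomp[m' [Se Se_sub [Se_size ceE]]] cv_mod ce_mod qs qs_size.
have /allP/(_ Sv) := ok; rewrite mem_filter Sv_size cv_mod eqxx Sv_sub => /(_ isT).
move=> /allP/(_ Se); rewrite mem_filter Se_size ce_mod eqxx Se_sub => /(_ isT).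
move=> /allP/(_ qs); rewrite -qs_size mem_seqs_over ?all_klein4_enum // => /(_ isT).
case/hasP => xs; rewrite mem_filter => /andP[v_bal /size_seqs_over xs_size] e_bal.
exists xs => //; split.
  by apply: (balanced_offset (m := m) _ v_bal) => a; rewrite cvE count_cat addnA.
by apply: (balanced_offset (m := m') _ e_bal) => a; rewrite ceE count_cat addnA.
Qed.

Lemma extendable_leaf r : r < 3 -> extendable r 1 1 (@pendant_labels _).
Proof.
have ok : all (fun r => extendable r 1 1 (@pendant_labels _)) [:: 0; 1; 2] by vm_compute.
by move=> r_lt3; apply: (allP ok); rewrite !inE; lia.
Qed.

Lemma extendable_three_leaves : extendable 1 3 3 (@pendant_labels _).
Proof. by vm_compute. Qed.

Lemma extendable_pendant_path :
  extendable 3 1 5 (fun xs qs => pendant_labels xs (behead xs ++ qs)).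
Proof. by vm_compute. Qed.

Definition star_on_path_ok (cands : seq (seq Klein4)) (k : nat) (idss : seq (seq nat)) :=
  let P := [seq p <- [seq (Ls, xs) | Ls <- cands, xs <- seqs_over klein4_enum k]
             | count_balanced (p.1 ++ p.2)] in
  all (fun ids => has (fun p => count_balanced
        (path_labels p.1 ++ pendant_labels p.2 [seq nth 0%R p.1 i | i <- ids])) P) idss.

Definition star_on_path_labelable (n : nat) (ids : seq nat) :=
  exists Ls xs, [/\ size Ls = n, size xs = size ids, count_balanced (Ls ++ xs) &
    count_balanced (path_labels Ls ++ pendant_labels xs [seq nth 0%R Ls i | i <- ids])].

Lemma star_on_path_okP n cands idss ids : all (fun Ls => size Ls == n) cands ->
  star_on_path_ok cands (size ids) idss -> ids \in idss -> star_on_path_labelable n ids.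
Proof.
move=> /allP cands_size /allP ok /ok /hasP[[Ls xs]].
rewrite mem_filter => /andP[v_bal /allpairsP[[Ls' xs']] /= [Ls_in xs_in [eLs exs]]] e_bal.
subst Ls' xs'; exists Ls, xs; split=> //; first exact/eqP/cands_size.
exact: size_seqs_over xs_in.
Qed.

Definition klein4_word (ns : seq nat) := [seq nth 0%R klein4_enum n | n <- ns].

Lemma path4_leaf_labelable i : i \in [:: 1; 2] -> star_on_path_labelable 4 [:: i].
Proof.
move=> i_in; apply: (star_on_path_okP (cands := [:: klein4_word [:: 0; 1; 1; 2]])
  (idss := [:: [:: 1]; [:: 2]])).
- by vm_compute.
- by vm_compute.
by move: i_in; rewrite !inE => /orP[]/eqP->.
Qed.

Lemma path5_leaf_labelable i : i < 5 -> star_on_path_labelable 5 [:: i].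
Proof.
move=> i_lt5; apply: (star_on_path_okP (cands := [:: klein4_word [:: 0; 1; 1; 2; 0]])
  (idss := seqs_over (iota 0 5) 1)); [by vm_compute | by vm_compute |].
have i_in : i \in iota 0 5 by rewrite mem_iota.
by apply: (mem_seqs_over (s := [:: i])); rewrite all_seq1.
Qed.

Lemma path5_three_leaves_labelable ids :
  size ids = 3 -> all (fun i => i < 5) ids -> star_on_path_labelable 5 ids.
Proof.
move=> ids_size ids_lt5.
apply: (star_on_path_okP (idss := seqs_over (iota 0 5) 3)
  (cands := [seq klein4_word w | w <- [:: [:: 0; 0; 1; 1; 2]; [:: 0; 1; 1; 2; 2];
                                         [:: 0; 1; 1; 2; 3]; [:: 0; 1; 2; 2; 3]]])).
- by vm_compute.
- by rewrite ids_size; vm_compute.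
have : ids \in seqs_over (iota 0 5) (size ids).
  by apply: mem_seqs_over; apply: sub_all ids_lt5 => i i_lt5; rewrite inE mem_iota.
by rewrite ids_size.
Qed.

Lemma path_labels_unbalanced Ls :
  size Ls \in [:: 4; 5] -> count_balanced Ls -> ~~ count_balanced (path_labels Ls).
Proof.
have ok n : n \in [:: 4; 5] -> all (fun Ls => count_balanced Ls ==> ~~ count_balanced (path_labels Ls))
  (seqs_over klein4_enum n).
  by rewrite !inE => /orP[]/eqP->; vm_compute.
move=> /ok/allP/(_ Ls (mem_seqs_over (all_klein4_enum Ls))).
exact/implyP.
Qed.

Lemma path_labels_cons (A : zmodType) (x y : A) s :
  path_labels [:: x, y & s] = (x + y)%R :: path_labels (y :: s).
Proof. by []. Qed.


Lemma maximal_path (T : finType) (r : rel T) x p : path r x p -> uniq (x :: p) ->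
  exists q, [/\ path r x (p ++ q), uniq (x :: p ++ q) &
                forall z, r (last x (p ++ q)) z -> z \in x :: p ++ q].
Proof.
have [n] := ubnP (#|T| - size p); elim: n p => // n IH p /ltnSE bound p_path p_uniq.
case: (pickP (fun z => r (last x p) z && (z \notin x :: p))) => [z /andP[rz zN] | none].
  have p_small : size (x :: p) <= #|T| by rewrite -(card_uniqP p_uniq) max_card.
  have [|||q [q_path q_uniq q_max]] := IH (rcons p z).
  - by rewrite size_rcons; move: bound p_small => /=; lia.
  - by rewrite rcons_path p_path.
  - by rewrite -rcons_cons rcons_uniq zN.
  by exists (z :: q); rewrite -cat_rcons.
exists [::]; rewrite cats0; split=> // z rz; apply: contraFT (none z) => zN.
by rewrite rz.
Qed.

Lemma index_rev (T : eqType) (x : T) s :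
  uniq s -> x \in s -> index x (rev s) = size s - (index x s).+1.
Proof.
move=> s_uniq xs; have := index_mem x s; rewrite xs => i_lt.
set k := size s - _; have k_lt : k < size s by rewrite /k; lia.
have nth_k : nth x (rev s) k = x.
  by rewrite nth_rev // (_ : size s - k.+1 = index x s) ?nth_index // /k; lia.
by rewrite -{1}nth_k index_uniq ?rev_uniq ?size_rev.
Qed.

Section Tree.
Variables (T : finType) (e : rel T).
Hypotheses (e_sym : symmetric e) (e_irr : irreflexive e).
Implicit Types U : {set T}.

Definition nbhd (U : {set T}) x := [set y in U | e x y].

Definition pendant (U : {set T}) v w := (v \in U) && (nbhd U v == [set w]).

Definition connected_in (U : {set T}) :=
  {in U &, forall x y, connect [rel x y in U | e x y] x y}.

Lemma pendant_adj U v w y : pendant U v w -> y \in U -> e v y = (y == w).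
Proof.
by case/andP=> _ /eqP/setP/(_ y); rewrite !inE => + yU; rewrite yU.
Qed.

Lemma pendantP U v w : pendant U v w -> [/\ v \in U, w \in U, e v w & w != v].
Proof.
move=> pvw; have /andP[vU /eqP/setP/(_ w)] := pvw; rewrite !inE eqxx => /andP[wU evw].
by split=> //; apply: contraTneq evw => ->; rewrite e_irr.
Qed.

Lemma pendant_setD1 U v x w : x != v -> ~~ e x v -> pendant (U :\ v) x w = pendant U x w.
Proof.
move=> xv nexv; rewrite /pendant in_setD1 xv; have -> : nbhd (U :\ v) x = nbhd U x.
  by apply/setP=> y; rewrite !inE; case: eqP => [->|] //=; rewrite (negbTE nexv) andbF.
by [].
Qed.

Lemma connected_setD1_pendant U v w :
  connected_in U -> pendant U v w -> connected_in (U :\ v).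
Proof.
move=> U_conn pvw x y; rewrite !inE => /andP[xv xU] /andP[yv yU].
move: yv; have [p p_path ->] := connectP (U_conn x y xU yU).
case/shortenP: p_path => {p} p p_path p_uniq _ yv.
have vNp : v \notin p.
  apply/negP=> vp; move: p_path p_uniq yv; case/splitPr: vp => p1 p2.
  case: p2 => [|z p2]; first by rewrite last_cat /= eqxx.
  rewrite cat_path -cat_cons cat_uniq.
  move=> /andP[_ /= /and3P[/andP[/andP[uU _] e_uv] /andP[/andP[_ zU] e_vz] _]].
  move=> /and3P[_ /negP zN _] _; apply: zN.
  have u_w : last x p1 = w by apply/eqP; rewrite -(pendant_adj pvw uU) e_sym.
  have z_w : z = w by apply/eqP; rewrite -(pendant_adj pvw zU).
  by rewrite z_w -u_w mem_last orbT.
apply/connectP; exists p => //; apply: (sub_in_path (P := predC1 v)) p_path.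
  by move=> a b; rewrite !inE /= => av bv /andP[/andP[aU bU] ->]; rewrite !in_setD1 av bv aU bU.
by rewrite all_predC has_pred1 inE negb_or eq_sym xv.
Qed.
Fixpoint peel U (p : seq (T * T)) : bool :=
  if p is (v, w) :: p' then pendant U v w && peel (U :\ v) p' else true.

Definition rest U (p : seq (T * T)) := U :\: [set x in map fst p].

Lemma rest0 U : rest U [::] = U.
Proof. by apply/setP=> x; rewrite !inE. Qed.

Lemma rest_cons U v w p : rest U ((v, w) :: p) = rest (U :\ v) p.
Proof.
rewrite /rest /=.
by apply/setP=> x; rewrite !inE negb_or -andbA andbCA.
Qed.

Lemma peel_cat U p q : peel U (p ++ q) = peel U p && peel (rest U p) q.
Proof.
elim: p U => [|[v w] p IH] U /=; first by rewrite rest0.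
by rewrite IH rest_cons andbA.
Qed.

Lemma peel_uniq U p : peel U p -> uniq (map fst p) && all (mem U) (map fst p).
Proof.
elim: p U => [|[v w] p IH] //= U /andP[/pendantP[vU _ _ _] /IH/andP[p_uniq p_sub]].
rewrite p_uniq vU andbT /=; apply/andP; split.
  by apply: contraTN p_sub => vp; apply/allPn; exists v; rewrite // !inE eqxx.
by apply: sub_all p_sub => x; rewrite !inE => /andP[].
Qed.

Lemma card_rest U p : peel U p -> #|U| = #|rest U p| + size p.
Proof.
elim: p U => [|[v w] p IH] U /=; first by rewrite rest0 addn0.
case/andP=> /pendantP[vU _ _ _] /IH; rewrite rest_cons (cardsD1 v U) vU => ->.
by rewrite addnS add1n.
Qed.

Lemma connected_rest U p : connected_in U -> peel U p -> connected_in (rest U p).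
Proof.
elim: p U => [|[v w] p IH] U /= U_conn; first by rewrite rest0.
by case/andP=> pvw; rewrite rest_cons; apply/IH/(connected_setD1_pendant U_conn pvw).
Qed.

Definition induced_path U s := [/\ uniq s, U = [set x in s] &
  {in s &, forall x y, e x y = ((index x s).+1 == index y s) || ((index y s).+1 == index x s)}].

Lemma mem_induced_path U s x : induced_path U s -> (x \in U) = (x \in s).
Proof. by case=> _ -> _; rewrite in_set. Qed.

Lemma card_induced_path U s : induced_path U s -> #|U| = size s.
Proof. by case=> s_uniq -> _; rewrite cardsE; apply/card_uniqP. Qed.

Lemma induced_path_rev U s : induced_path U s -> induced_path U (rev s).
Proof.
case=> s_uniq -> s_adj; split; first by rewrite rev_uniq.
  by apply/setP=> x; rewrite !inE mem_rev.
move=> x y; rewrite !mem_rev => xs ys; rewrite s_adj // !index_rev //.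
have := index_mem x s; have := index_mem y s; rewrite xs ys.
by move: (index x s) (index y s) (size s) => i j n j_lt i_lt; apply/orP/orP; lia.
Qed.

Lemma induced_path_cons U x y s :
  induced_path U [:: x, y & s] -> pendant U x y /\ induced_path (U :\ x) (y :: s).
Proof.
case=> /andP[xN t_uniq] U_eq adj.
have idx z : z \in y :: s -> index z [:: x, y & s] = (index z (y :: s)).+1.
  by move=> zt; rewrite [index z _]/= ifN //; apply: contraNneq xN => ->.
have in_t z : z \in y :: s -> z \in [:: x, y & s] by move=> zt; rewrite in_cons zt orbT.
split; last first.
  split=> // [|z z' zt z't]; last by rewrite adj ?in_t // !idx.
  apply/setP=> z; rewrite U_eq in_setD1 !in_set in_cons.
  by case: (eqVneq z x) => [->|] //=; rewrite (negbTE xN).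
rewrite /pendant U_eq in_set mem_head /=; apply/eqP/setP=> z; rewrite !in_set.
case: (boolP (z \in [:: x, y & s])) => [zt | zNt]; last first.
  by rewrite in_set1; apply/esym; apply: contraNF zNt => /eqP->; rewrite in_t ?mem_head.
rewrite adj ?mem_head // in_set1 /= eqxx /= orbF.
have [<-|_] := eqVneq x z; first by apply/esym/negbTE; apply: contraNneq xN => ->; apply: mem_head.
by case: (eqVneq y z).
Qed.

Lemma induced_path_extend U v w s :
  induced_path (U :\ v) (w :: s) -> pendant U v w -> induced_path U [:: v, w & s].
Proof.
case=> t_uniq Uv_eq adj pvw; have [vU _ _ _] := pendantP pvw.
have mem_t z : (z \in w :: s) = (z != v) && (z \in U) by rewrite -in_setD1 Uv_eq in_set.
have vN : v \notin w :: s by rewrite mem_t eqxx.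
have idx z : z \in w :: s -> index z [:: v, w & s] = (index z (w :: s)).+1.
  by move=> zt; rewrite [index z _]/= ifN //; apply: contraNneq vN => ->.
have adj_v z : z \in w :: s -> e v z = (index z (w :: s) == 0).
  move=> zt; have /andP[_ zU] : (z != v) && (z \in U) by rewrite -mem_t.
  by rewrite (pendant_adj pvw zU) [index z _]/= eq_sym; case: eqP.
split; first by rewrite cons_uniq vN t_uniq.
  apply/setP=> z; rewrite in_set in_cons mem_t.
  by have [->|zv] := eqVneq z v.
have idx_v : index v [:: v, w & s] = 0 by rewrite /= eqxx.
have in_t z : z != v -> z \in [:: v, w & s] -> z \in w :: s by move=> zv; rewrite [z \in [:: v, w & s]]in_cons (negbTE zv).
move=> z z' zt z't.
have [->|zv] := eqVneq z v; have [->|z'v] := eqVneq z' v.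
- by rewrite e_irr idx_v.
- by rewrite adj_v ?in_t // idx_v idx ?in_t // eqSS orbF.
- by rewrite e_sym adj_v ?in_t // idx_v idx ?in_t // eqSS orbF orbC.
by rewrite adj ?in_t // !idx ?in_t.
Qed.

Lemma induced_path_extend_end U v w s :
  induced_path (U :\ v) s -> pendant U v w ->
  (index w s == 0) || (index w s == (size s).-1) ->
  exists2 s', induced_path U s' & size s' = (size s).+1.
Proof.
move=> s_path pvw; have [vU wU _ wv] := pendantP pvw.
have ws : w \in s by rewrite -(mem_induced_path _ s_path) in_setD1 wv wU.
case: s s_path ws => [|x t] // s_path ws.
case/orP=> [/eqP i0 | /eqP i_last].
  have xw : x = w by move: i0 => /=; case: eqP.
  by exists [:: v, x & t]; rewrite // xw in s_path *; apply: induced_path_extend.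
have lw : last x t = w by rewrite -[last x t]/(last w (x :: t)) -nth_last -i_last nth_index.
exists [:: v, w & rev (belast x t)]; last by rewrite /= size_rev size_belast.
apply: induced_path_extend => //; rewrite -lw -rev_rcons -lastI.
exact: induced_path_rev.
Qed.

Lemma induced_path_peel U x vs z s :
  induced_path U (x :: vs ++ z :: s) -> peel U (zip (x :: vs) (rcons vs z)).
Proof.
elim: vs x U => [|y vs IH] x U /= /induced_path_cons[pxy xs_path]; rewrite pxy //=.
exact: IH.
Qed.

Definition star U (p : seq (T * T)) := [&& uniq (map fst p),
  all (fun vw => pendant U vw.1 vw.2) p & all (fun w => w \notin map fst p) (map snd p)].

Lemma star1 U v w : pendant U v w -> star U [:: (v, w)].
Proof. by move=> pvw; have [_ _ _ wv] := pendantP pvw; rewrite /star /= pvw inE wv. Qed.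

Lemma star_take U p n : star U p -> star U (take n p).
Proof.
case/and3P=> p_uniq /allP p_pend /allP p_att; apply/and3P; split.
- by rewrite map_take take_uniq.
- by apply/allP=> vw /mem_take /p_pend.
apply/allP=> w; rewrite !map_take => /mem_take /p_att; apply: contra; exact: mem_take.
Qed.

Lemma star_peel U p : star U p -> peel U p.
Proof.
case/and3P; elim: p U => [|[v w] p IH] //= U /andP[vN p_uniq] /andP[pvw p_pend] /andP[wN p_att].
rewrite pvw; apply: IH => //.
  apply/allP=> -[v' w'] vw'p /=; have pv'w' := allP p_pend _ vw'p.
  have v'v : v' != v by apply: contraNneq vN => <-; apply/mapP; exists (v', w').
  have [v'U _ _ _] := pendantP pv'w'.
  rewrite pendant_setD1 // e_sym (pendant_adj pvw v'U).
  by apply: contraNneq wN => <-; rewrite in_cons (map_f fst vw'p) orbT.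
by apply: sub_all p_att => u; rewrite inE negb_or => /andP[].
Qed.

Lemma star_rest U p : star U p -> {subset map snd p <= rest U p}.
Proof.
case/and3P=> _ /allP p_pend /allP p_att _ /mapP[[v w] vwp ->] /=.
have [_ wU _ _] := pendantP (p_pend _ vwp).
by rewrite !inE p_att ?(map_f snd vwp).
Qed.

Lemma star_extend U v w p : star (U :\ v) p -> pendant U v w ->
  star U ((v, w) :: [seq vw <- p | vw.1 != w]).
Proof.
case/and3P=> p_uniq /allP p_pend /allP p_att pvw; have [vU _ _ wv] := pendantP pvw.
set q := filter _ p; have q_sub : {subset map fst q <= map fst p}.
  by apply: mem_subseq; apply/map_subseq/filter_subseq.
have in_Uv vw : vw \in q -> [/\ vw.1 != w, vw \in p, vw.1 \in U :\ v & vw.2 \in U :\ v].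
  by rewrite mem_filter => /andP[vw_w vwp]; have [] := pendantP (p_pend _ vwp).
apply/and3P; split.
- rewrite /= (subseq_uniq _ p_uniq) ?andbT; last exact/map_subseq/filter_subseq.
  by apply/mapP=> -[vw /in_Uv[_ _ + _] vE]; rewrite -vE !inE eqxx.
- rewrite /= pvw; apply/allP=> vw /in_Uv[vw_w vwp v1U _].
  move: v1U; rewrite in_setD1 => /andP[v1v v1U].
  by rewrite -(@pendant_setD1 _ v) ?p_pend // e_sym (pendant_adj pvw v1U).
rewrite /= in_cons negb_or wv /=; apply/andP; split.
  by apply/mapP=> -[vw /in_Uv[+ _ _ _] wE]; rewrite -wE eqxx.
apply/allP=> _ /mapP[vw vwq ->]; have [_ vwp _ v2U] := in_Uv _ vwq.
rewrite in_cons negb_or; move: v2U; rewrite in_setD1 => /andP[-> _] /=.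
by apply: contra (q_sub _) _; apply: p_att; apply: map_f.
Qed.

Lemma induced_path_ends_star U x x' t y y' t' :
  induced_path U [:: x, x' & t] -> rev [:: x, x' & t] = [:: y, y' & t'] -> t != [::] ->
  star U [:: (x, x'); (y, y')].
Proof.
set s := [:: x, x' & t] => s_path rev_s t_nil.
have [pxx' _] := induced_path_cons s_path.
have rs_path : induced_path U [:: y, y' & t'] by rewrite -rev_s; apply: induced_path_rev.
have [pyy' _] := induced_path_cons rs_path.
have [s_uniq _ s_adj] := s_path.
have ys : y \in s by rewrite -mem_rev rev_s mem_head.
have idx_y : index y s = (size s).-1.
  have := index_rev s_uniq ys; rewrite rev_s [index y _]/= eqxx.
  by have := index_mem y s; rewrite ys; lia.
have n_gt2 : 2 < size s by rewrite /s /= !ltnS lt0n size_eq0.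
have nexy : ~~ e x y.
  by rewrite s_adj ?mem_head // idx_y [index x _]/= eqxx; apply/norP; split; apply/eqP; lia.
have [_ _ exx' x'x] := pendantP pxx'; have [_ _ eyy' y'y] := pendantP pyy'.
rewrite /star /= !inE !negb_or x'x y'y pxx' pyy' /= !andbT; apply/and3P; split.
- by apply/eqP=> xy; move: idx_y; rewrite -xy [index x _]/= eqxx; lia.
- by apply: contraNneq nexy => <-.
by apply: contraNneq nexy => <-; rewrite e_sym.
Qed.

Section Counts.
Variable A : zmodType.
Implicit Types (l : T -> A) (a : A).

Definition vcount l U a := #|[set v in U | l v == a]|.

Definition edge_labelled l a (E : {set T}) :=
  [exists x, exists y, [&& e x y, E == [set x; y] & (l x + l y == a)%R]].

Definition ecount l U a := #|[set E in edges e | (E \subset U) && edge_labelled l a E]|.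

Lemma edge_labelled_pair l a x y : e x y -> edge_labelled l a [set x; y] = (l x + l y == a)%R.
Proof.
move=> exy; apply/existsP/idP => [[x' /existsP[y' /and3P[exy' /eqP xy_eq]]] | lxy].
  have : x' \in [set x; y] /\ y' \in [set x; y] by rewrite xy_eq !inE !eqxx orbT.
  rewrite !inE => -[/orP[]/eqP x'E /orP[]/eqP y'E]; subst x' y';
    by [ | rewrite addrC | move: exy'; rewrite e_irr].
by exists x; apply/existsP; exists y; rewrite exy eqxx.
Qed.

Lemma vcount_setD1 l U v a : v \in U -> vcount l U a = vcount l (U :\ v) a + (l v == a).
Proof.
move=> vU; rewrite /vcount (cardsD1 v) inE vU /= addnC; congr (_ + _).
by apply: eq_card => x; rewrite !inE andbA.
Qed.

Lemma ecount_pendant l U v w a : pendant U v w ->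
  ecount l U a = ecount l (U :\ v) a + (l v + l w == a)%R.
Proof.
move=> pvw; have [vU wU evw wv] := pendantP pvw.
have vw_edge : [set v; w] \in edges e.
  by rewrite inE; apply/existsP; exists v; apply/existsP; exists w; rewrite evw eqxx.
rewrite /ecount (cardsD1 [set v; w]) addnC inE vw_edge subUset !sub1set vU wU.
rewrite edge_labelled_pair //; congr (_ + _); apply: eq_card => E; rewrite !inE.
case: existsP => [[x /existsP[y /andP[exy /eqP->]]] | _]; last by rewrite andbF.
rewrite /= !subUset !sub1set !in_setD1.
have [xv|xv] := eqVneq x v; first subst x.
  case yU : (y \in U); last by rewrite !andbF.
  rewrite (pendant_adj pvw yU) in exy; by rewrite (eqP exy) eqxx.
have [yv|yv] := eqVneq y v; first subst y.
  case xU : (x \in U); last by rewrite !andbF.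
  rewrite e_sym (pendant_adj pvw xU) in exy; by rewrite (eqP exy) setUC eqxx.
suff -> : [set x; y] != [set v; w] by [].
by apply: contraTneq (set21 v w) => <-; rewrite !inE negb_or eq_sym xv eq_sym yv.
Qed.

Lemma vcount_eq_in l l' U a : {in U, l =1 l'} -> vcount l U a = vcount l' U a.
Proof. by move=> ll'; apply: eq_card => x; rewrite !inE; case: (boolP (x \in U)) => // /ll'->. Qed.

Lemma ecount_eq_in l l' U a : {in U, l =1 l'} -> ecount l U a = ecount l' U a.
Proof.
move=> ll'; apply: eq_card => E; rewrite !inE; case: (boolP (E \subset U)) => //= /subsetP EU.
congr (_ && _); apply/existsP/existsP => -[x /existsP[y /and3P[exy /eqP E_xy lxy]]];
  exists x; apply/existsP; exists y; rewrite exy E_xy eqxx /=;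
  have [xU yU] : x \in U /\ y \in U by split; apply: EU; rewrite E_xy !inE eqxx ?orbT.
  by rewrite -(ll' x xU) -(ll' y yU).
by rewrite (ll' x xU) (ll' y yU).
Qed.

Lemma vcount_set1 l x a : vcount l [set x] a = (l x == a).
Proof.
rewrite /vcount; have [<-|ne] := eqVneq (l x) a.
  rewrite (_ : [set v in [set x] | l v == l x] = [set x]) ?cards1 //.
  by apply/setP=> y; rewrite !inE andb_idr // => /eqP->.
rewrite (_ : [set v in [set x] | l v == a] = set0) ?cards0 //.
by apply/setP=> y; rewrite !inE; apply/negbTE/andP=> -[/eqP-> lxa]; rewrite lxa in ne.
Qed.

Lemma ecount_set1 l x a : ecount l [set x] a = 0.
Proof.
rewrite /ecount; apply/eqP; rewrite cards_eq0; apply/eqP/setP=> E; rewrite !inE.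
apply/negbTE/andP=> -[/existsP[y /existsP[z /andP[eyz /eqP->]]] /andP[]].
by rewrite subUset !sub1set !inE => /andP[/eqP yx /eqP zx]; rewrite yx zx e_irr in eyz.
Qed.

Lemma vcount_peel l U p a : peel U p ->
  vcount l U a = vcount l (rest U p) a + count_mem a (map l (map fst p)).
Proof.
elim: p U => [|[v w] p IH] U /=; first by rewrite rest0 addn0.
case/andP=> pvw /IH IHp; have [vU _ _ _] := pendantP pvw.
by rewrite (vcount_setD1 l a vU) IHp rest_cons addnAC -addnA.
Qed.

Lemma ecount_peel l U p a : peel U p ->
  ecount l U a = ecount l (rest U p) a +
    count_mem a (pendant_labels (map l (map fst p)) (map l (map snd p))).
Proof.
elim: p U => [|[v w] p IH] U /=; first by rewrite rest0 addn0.
case/andP=> pvw /IH IHp.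
by rewrite (ecount_pendant l a pvw) IHp rest_cons addnAC -addnA.
Qed.

Definition extend (l0 : T -> A) (vs : seq T) (xs : seq A) z :=
  if z \in vs then nth 0%R xs (index z vs) else l0 z.

Lemma extend_out l0 vs xs z : z \notin vs -> extend l0 vs xs z = l0 z.
Proof. by rewrite /extend => /negbTE->. Qed.

Lemma map_extend l0 vs xs : uniq vs -> size xs = size vs -> map (extend l0 vs xs) vs = xs.
Proof.
case: vs => [|x0 vs] vs_uniq xs_size; first by case: xs xs_size.
apply: (@eq_from_nth _ 0%R); rewrite size_map // => i i_lt.
by rewrite (nth_map x0) // /extend mem_nth // index_uniq.
Qed.

Lemma extend_counts l0 U p xs : peel U p -> size xs = size p ->
  let l := extend l0 (map fst p) xs in
  (forall a, vcount l U a = vcount l0 (rest U p) a + count_mem a xs) /\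
  (forall a, ecount l U a =
     ecount l0 (rest U p) a + count_mem a (pendant_labels xs (map l (map snd p)))).
Proof.
move=> p_peel xs_size l; have /andP[p_uniq _] := peel_uniq p_peel.
have l_vs : map l (map fst p) = xs by rewrite map_extend // size_map.
have l_rest : {in rest U p, l =1 l0} by move=> z; rewrite !inE => /andP[zN _]; apply: extend_out.
split=> a.
  by rewrite (vcount_peel _ _ p_peel) l_vs (vcount_eq_in _ l_rest).
by rewrite (ecount_peel _ _ p_peel) l_vs (ecount_eq_in _ l_rest).
Qed.

Lemma induced_path_counts l U s : induced_path U s -> s != [::] ->
  (forall a, vcount l U a = count_mem a (map l s)) /\
  (forall a, ecount l U a = count_mem a (path_labels (map l s))).
Proof.
elim: s U => // x [|y s] IH U s_path _.
  have -> : U = [set x] by case: s_path => _ -> _; apply/setP=> z; rewrite !inE.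
  by split=> a; rewrite ?vcount_set1 ?ecount_set1 //= addn0.
have [pxy /IH[//| vE eE]] := induced_path_cons s_path; have [xU _ _ _] := pendantP pxy.
split=> a; first by rewrite (vcount_setD1 l a xU) vE /= addnC.
by rewrite (ecount_pendant l a pxy) eE path_labels_cons /= addnC.
Qed.

Lemma star_extend_out l0 U p xs :
  star U p -> map (extend l0 (map fst p) xs) (map snd p) = map l0 (map snd p).
Proof. by case/and3P=> _ _ /allP p_att; apply/eq_in_map => w /p_att; apply: extend_out. Qed.

Lemma vcount_setT l a : vcount l [set: T] a = fV l a.
Proof. by apply: eq_card => v; rewrite !inE. Qed.

Lemma ecount_setT l a : ecount l [set: T] a = fE e l a.
Proof. by apply: eq_card => E; rewrite !inE subsetT. Qed.

End Counts.

Hypothesis e_acyclic : acyclic_graph e.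

Lemma maximal_path_pendant (U : {set T}) x s v :
  path [rel a b in U | e a b] x (rcons s v) -> uniq (x :: rcons s v) ->
  (forall z, (v \in U) && (z \in U) && e v z -> z \in x :: rcons s v) ->
  pendant U v (last x s).
Proof.
rewrite rcons_path -rcons_cons rcons_uniq => /andP[s_path /andP[/andP[wU vU] e_wv]].
move=> /andP[vNs s_uniq] s_max; rewrite /pendant vU; apply/eqP/setP=> u.
rewrite !inE; apply/idP/idP => [/andP[uU e_vu] | /eqP->]; last by rewrite wU e_sym.
apply: contraT => uNw; have := s_max u; rewrite vU uU e_vu mem_rcons inE => /(_ isT).
case: eqP => [uv | _ us]; first by rewrite uv e_irr in e_vu.
move: s_path uNw s_uniq vNs wU e_wv; case/splitPl: us => p1 p2 u_eq.
rewrite cat_path last_cat u_eq => /andP[_ p2_path] uNw.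
rewrite -cat_cons cat_uniq => /and3P[_ p2N p2_uniq] vNs wU e_wv.
have p2_nil : p2 != [::] by apply: contraNneq uNw => ->.
have uNp2 : u \notin p2 by apply: contra p2N => up2; apply/hasP; exists u; rewrite // -u_eq mem_last.
have c_uniq : uniq (u :: rcons p2 v).
  rewrite /= rcons_uniq mem_rcons inE negb_or uNp2 andbT.
  move: vNs; rewrite mem_cat negb_or => /andP[_ ->] /=.
  by rewrite p2_uniq andbT; apply: contraTneq e_vu => ->; rewrite e_irr.
have c_size : 2 < size (u :: rcons p2 v) by rewrite /= size_rcons; case: (p2) p2_nil.
suff c_cycle : cycle e (u :: rcons p2 v) by have := e_acyclic c_uniq c_size; rewrite c_cycle.
rewrite /cycle rcons_path last_rcons e_vu andbT.
apply: (sub_path (e := [rel a b in U | e a b])); first by move=> a b /andP[_ ->].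
by rewrite rcons_path p2_path /= wU vU.
Qed.

Lemma exists_pendant U : connected_in U -> 1 < #|U| -> exists v w, pendant U v w.
Proof.
move=> U_conn /card_gt1P[x [y [xU yU xy]]].
have [[|z p] p_path y_eq] := connectP (U_conn x y xU yU); first by rewrite y_eq eqxx in xy.
case/andP: p_path => rxz _.
have xz : x != z by apply: contraTneq rxz => <-; rewrite /= e_irr andbF.
have [||q []] := maximal_path (r := [rel a b in U | e a b]) (x := x) (p := [:: z]).
- by rewrite /= andbT.
- by rewrite /= inE xz.
rewrite cat1s lastI => q_path q_uniq; rewrite last_rcons => q_max.
by exists (last z q), (last x (belast z q)); apply: maximal_path_pendant q_path q_uniq _.
Qed.

Lemma path_or_star_extend U v w s : induced_path (U :\ v) s -> pendant U v w ->
  (exists s, induced_path U s) \/ (exists2 p, star U p & 2 < size p).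
Proof.
move=> s_path pvw.
have [w_end | w_mid] := boolP ((index w s == 0) || (index w s == (size s).-1)).
  by left; have [s' s'_path _] := induced_path_extend_end s_path pvw w_end; exists s'.
have [vU wU _ wv] := pendantP pvw.
have ws : w \in s by rewrite -(mem_induced_path _ s_path) in_setD1 wv wU.
have [s_uniq _ _] := s_path.
have s_gt2 : 2 < size s.
  have := index_mem w s; rewrite ws; move: w_mid; rewrite negb_or => /andP[/eqP ? /eqP ?]; lia.
move: w_mid; rewrite negb_or => /andP[w_first w_last].
case: s s_path ws s_uniq s_gt2 w_first w_last => [|x [|x' [|x'' t]]] // s_path ws s_uniq _ w_first w_last.
have xw : x != w by apply: contraNneq w_first => ->; rewrite /= eqxx.
have rev_s := lastI x [:: x', x'' & t]; move: rev_s (congr1 rev rev_s); rewrite rev_rcons.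
case Eb : (rev (belast x [:: x', x'' & t])) => [|y' t'] _ rev_s.
  by move: (congr1 size Eb); rewrite size_rev size_belast.
have lw : last x [:: x', x'' & t] != w.
  apply: contraNneq w_last => <-.
  by rewrite -[last x _]/(last x [:: x, x', x'' & t]) -nth_last index_uniq.
right; exists ((v, w) :: [seq vw <- [:: (x, x'); (last x [:: x', x'' & t], y')] | vw.1 != w]).
  exact: star_extend (induced_path_ends_star s_path rev_s isT) pvw.
by rewrite /= xw lw.
Qed.

Lemma size_filter_fst_neq (p : seq (T * T)) w :
  uniq (map fst p) -> (size p).-1 <= size [seq vw <- p | vw.1 != w].
Proof.
elim: p => //= -[v w'] p IH /andP[vN p_uniq] /=; have [<- | _] := eqVneq v w; last first.
  by have := IH p_uniq; rewrite /=; lia.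
rewrite (_ : filter _ p = p) //; apply/all_filterP/allP => -[u u'] up /=.
by apply: contraNneq vN => <-; apply/mapP; exists (u, u').
Qed.

Lemma path_or_star U : connected_in U -> 0 < #|U| ->
  (exists s, induced_path U s) \/ (exists2 p, star U p & 2 < size p).
Proof.
have [n] := ubnP #|U|; elim: n U => // n IH U /ltnSE U_le U_conn U_gt0.
have [U_le1 | U_gt1] := leqP #|U| 1.
  have /cards1P[x ->] : #|U| == 1 by rewrite eqn_leq U_le1.
  left; exists [:: x]; split=> //; first by apply/setP=> z; rewrite !inE.
  by move=> z z'; rewrite !inE => /eqP-> /eqP->; rewrite e_irr /= eqxx.
have [v [w pvw]] := exists_pendant U_conn U_gt1.
have [vU _ _ _] := pendantP pvw.
have Uv_card : #|U :\ v| = #|U|.-1 by rewrite (cardsD1 v U) vU.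
case: (IH (U :\ v)) => [||| [s s_path] | [p p_star p_size]].
- by rewrite Uv_card; lia.
- exact: connected_setD1_pendant pvw.
- by rewrite Uv_card; lia.
- exact: path_or_star_extend s_path pvw.
right; exists ((v, w) :: [seq vw <- p | vw.1 != w]); first exact: star_extend.
have /and3P[p_uniq _ _] := p_star.
by have := size_filter_fst_neq w p_uniq; rewrite /=; lia.
Qed.

Definition cordial_on U :=
  exists l : T -> Klein4, balanced (vcount l U) /\ balanced (ecount l U).

Definition exceptional U := exists2 s, induced_path U s & size s \in [:: 4; 5].

Lemma sum_vcount (l : T -> Klein4) U : \sum_(a : Klein4) vcount l U a = #|U|.
Proof.
symmetry; transitivity (\sum_(v in U) 1); first by symmetry; apply: sum1_card.
rewrite (partition_big l predT) //; apply: eq_bigr => a _.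
by transitivity (\sum_(v in [set v in U | l v == a]) 1); [apply: eq_bigl => v; rewrite inE | apply: sum1_card].
Qed.

Lemma sum_ecount (l : T -> Klein4) U :
  connected_in U -> 0 < #|U| -> \sum_(a : Klein4) ecount l U a = #|U|.-1.
Proof.
have [n] := ubnP #|U|; elim: n U => // n IH U /ltnSE U_le U_conn U_gt0.
have [U_le1 | U_gt1] := leqP #|U| 1.
  have /cards1P[x ->] : #|U| == 1 by rewrite eqn_leq U_le1.
  by rewrite cards1 big1 // => a _; rewrite ecount_set1.
have [v [w pvw]] := exists_pendant U_conn U_gt1; have [vU _ _ _] := pendantP pvw.
have Uv_card : #|U :\ v| = #|U|.-1 by rewrite (cardsD1 v U) vU.
under eq_bigr => a _ do rewrite (ecount_pendant l a pvw).
have Uv_conn := connected_setD1_pendant U_conn pvw.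
rewrite big_split /= IH ?Uv_card //; try lia.
rewrite (bigD1 (l v + l w)%R) //= eqxx big1 => [|a]; first by rewrite addn0; lia.
by rewrite eq_sym => /negbTE->.
Qed.

Lemma cordial_on_set1 x : cordial_on [set x].
Proof.
exists (fun _ => 0%R); split=> a b; rewrite ?vcount_set1 ?ecount_set1 //.
by case: (_ == a); case: (_ == b).
Qed.

Lemma exceptional_not_cordial_on U : exceptional U -> ~ cordial_on U.
Proof.
case=> s s_path s_size [l [vbal ebal]].
have s_nil : s != [::] by case: (s) s_size.
have [vE eE] := induced_path_counts l s_path s_nil.
have vb : count_balanced (map l s) by apply/balancedP=> a b; rewrite -!vE.
have eb : count_balanced (path_labels (map l s)) by apply/balancedP=> a b; rewrite -!eE.
by have := path_labels_unbalanced (Ls := map l s); rewrite size_map s_size vb eb => /(_ isT isT).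
Qed.

Lemma cordial_on_peel U p (l0 : T -> Klein4) xs : peel U p -> size xs = size p ->
  balanced (fun a => vcount l0 (rest U p) a + count_mem a xs) ->
  balanced (fun a => ecount l0 (rest U p) a +
    count_mem a (pendant_labels xs (map (extend l0 (map fst p) xs) (map snd p)))) ->
  cordial_on U.
Proof.
move=> p_peel xs_size vbal ebal; exists (extend l0 (map fst p) xs).
have [vE eE] := extend_counts l0 p_peel xs_size.
by split=> a b; rewrite ?vE ?eE; [apply: vbal | apply: ebal].
Qed.

Lemma cordial_on_extend U p r nq E :
  peel U p -> connected_in (rest U p) -> 0 < #|rest U p| -> #|rest U p| %% 4 = r ->
  cordial_on (rest U p) -> extendable r nq (size p) E ->
  (forall l0 : T -> Klein4, exists2 qs, size qs = nq & forall xs, size xs = size p ->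
     pendant_labels xs (map (extend l0 (map fst p) xs) (map snd p)) = E xs qs) ->
  cordial_on U.
Proof.
move=> p_peel R_conn R_gt0 R_mod [l0 [vbal ebal]] ok E_spec.
have [qs qs_size E_eq] := E_spec l0.
have v_mod : (\sum_a vcount l0 (rest U p) a) %% 4 = r by rewrite sum_vcount.
have e_mod : (\sum_a ecount l0 (rest U p) a) %% 4 = (r + 3) %% 4 by rewrite sum_ecount //; lia.
have [xs xs_size [vbal' ebal']] := extendableP ok vbal ebal v_mod e_mod qs_size.
by apply: (cordial_on_peel p_peel xs_size vbal'); rewrite E_eq.
Qed.

Lemma cordial_on_star_on_path U p s : star U p -> induced_path (rest U p) s -> s != [::] ->
  star_on_path_labelable (size s) [seq index w s | w <- map snd p] -> cordial_on U.
Proof.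
move=> p_star s_path s_nil [Ls [xs [Ls_size xs_size vbal ebal]]].
rewrite !size_map in xs_size; have [s_uniq _ _] := s_path.
pose l0 := extend (fun _ => 0%R) s Ls; have l0_s : map l0 s = Ls by apply: map_extend.
have [vE eE] := induced_path_counts l0 s_path s_nil.
apply: (cordial_on_peel (l0 := l0) (star_peel p_star) xs_size).
  by apply: (balanced_offset (m := 0) _ vbal) => a; rewrite vE l0_s count_cat.
apply: (balanced_offset (m := 0) _ ebal) => a; rewrite (star_extend_out _ _ p_star) eE l0_s count_cat.
congr (_ + count_mem _ (pendant_labels _ _)); rewrite -!map_comp.
apply/eq_in_map => vw vw_p /=; have w_rest := star_rest p_star (map_f snd vw_p).
by rewrite /l0 /extend -(mem_induced_path _ s_path) w_rest.
Qed.

Lemma cordial_on_star U p : connected_in U -> star U p -> 0 < #|rest U p| ->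
  cordial_on (rest U p) -> extendable (#|rest U p| %% 4) (size p) (size p) (@pendant_labels _) ->
  cordial_on U.
Proof.
move=> U_conn p_star R_gt0 R_cordial ok; have p_peel := star_peel p_star.
apply: (cordial_on_extend p_peel (connected_rest U_conn p_peel) R_gt0 (erefl _) R_cordial ok).
move=> l0; exists (map l0 (map snd p)); first by rewrite !size_map.
by move=> xs _; rewrite (star_extend_out _ _ p_star).
Qed.

Lemma cordial_on_setT : cordial_on [set: T] <-> cordial e Klein4.
Proof.
split=> -[l [vbal ebal]]; exists l; split=> a b.
- by rewrite -!vcount_setT.
- by rewrite -!ecount_setT.
- by rewrite !vcount_setT.
- by rewrite !ecount_setT.
Qed.

Lemma connected_in_setT : connected_graph e -> connected_in [set: T].
Proof.
move=> e_conn x y _ _; rewrite (eq_connect (e' := e)) // => u v.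
by rewrite /= !inE.
Qed.

Lemma iso_path_induced_path n : iso_path e n ->
  exists2 s, induced_path [set: T] s & size s = n.
Proof.
case=> f [[g fK gK] f_adj]; exists (map g (enum 'I_n)); last by rewrite size_map size_enum_ord.
have g_inj : injective g := can_inj gK.
have idx x : index x (map g (enum 'I_n)) = f x.
  by rewrite -{1}(fK x) index_map // index_enum_ord.
split; first by rewrite map_inj_uniq ?enum_uniq.
  by apply/setP=> x; rewrite !inE -(fK x) map_f ?mem_enum.
by move=> x y _ _; rewrite !idx f_adj.
Qed.

Lemma induced_path_iso_path x0 s : induced_path [set: T] (x0 :: s) ->
  iso_path e (size (x0 :: s)).
Proof.
case=> s_uniq T_eq s_adj.
have mem_s x : x \in x0 :: s by have := in_setT x; rewrite T_eq in_set.
have idx_lt x : index x (x0 :: s) < size (x0 :: s) by rewrite index_mem.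
exists (fun x => Ordinal (idx_lt x)); split.
  exists (fun i : 'I_(size (x0 :: s)) => nth x0 (x0 :: s) i) => [x | i] /=.
    by rewrite nth_index.
  by apply: val_inj; exact: index_uniq (ltn_ord i) s_uniq.
by move=> x y; rewrite s_adj.
Qed.

Section InductionStep.

Variable U : {set T}.
Hypothesis U_conn : connected_in U.
Hypothesis IH : forall R : {set T}, #|R| < #|U| -> connected_in R -> 0 < #|R| ->
  exceptional R \/ cordial_on R.

Lemma leaf_case v w : pendant U v w -> #|U| %% 4 != 0 -> exceptional U \/ cordial_on U.
Proof.
move=> pvw U_mod; have [vU wU _ wv] := pendantP pvw.
have U_gt1 : 1 < #|U| by apply/card_gt1P; exists v, w; rewrite eq_sym.
have R_eq : rest U [:: (v, w)] = U :\ v by rewrite rest_cons rest0.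
have R_card : #|U :\ v| = #|U|.-1 by rewrite (cardsD1 v U) vU.
have R_conn := connected_setD1_pendant U_conn pvw.
have p_star := star1 pvw.
have [||| [s s_path s_size] | R_cordial] := IH (R := U :\ v) => //; try lia.
  have ws : w \in s by rewrite -(mem_induced_path _ s_path) in_setD1 wv wU.
  have s_nil : s != [::] by case: (s) ws.
  have i_lt : index w s < size s by rewrite index_mem.
  rewrite -R_eq in s_path; move: s_size; rewrite !inE => /orP[]/eqP s_size.
    have [w_end | w_mid] := boolP ((index w s == 0) || (index w s == (size s).-1)).
      rewrite R_eq in s_path; have [s' s'_path s'_size] := induced_path_extend_end s_path pvw w_end.
      by left; exists s'; rewrite // s'_size s_size.
    right; apply: (cordial_on_star_on_path p_star s_path s_nil).
    rewrite s_size; apply: path4_leaf_labelable.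
    by rewrite !inE /=; move: w_mid i_lt; rewrite s_size; lia.
  right; apply: (cordial_on_star_on_path p_star s_path s_nil).
  by rewrite s_size; apply: path5_leaf_labelable; rewrite -s_size.
right; apply: (cordial_on_star U_conn p_star); rewrite R_eq.
- by lia.
- exact: R_cordial.
- by apply: extendable_leaf; rewrite R_card; lia.
Qed.

Lemma pendant_path_case x vs z t :
  induced_path U (x :: vs ++ z :: t) -> size vs = 4 -> (size t).+1 %% 4 = 3 -> cordial_on U.
Proof.
move=> s_path vs_size t_mod; set p := zip (x :: vs) (rcons vs z).
have p_peel : peel U p := induced_path_peel s_path.
have p_fst : map fst p = x :: vs by apply: unzip1_zip; rewrite /= size_rcons.
have p_snd : map snd p = rcons vs z by apply: unzip2_zip; rewrite /= size_rcons.
have p_size : size p = 5 by rewrite size_zip size_rcons /= vs_size.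
have U_card : #|U| = size t + 6 by rewrite (card_induced_path s_path) /= size_cat /= vs_size; lia.
have R_card : #|rest U p| = (size t).+1 by move: (card_rest p_peel); rewrite U_card p_size; lia.
have R_conn := connected_rest U_conn p_peel.
have [||| [s' s'_path s'_size] | R_cordial] := IH (R := rest U p) => //; try lia.
  by move: s'_size; rewrite -(card_induced_path s'_path) R_card !inE => /orP[]/eqP; lia.
apply: (cordial_on_extend p_peel R_conn _ (erefl _) R_cordial); first by lia.
  by rewrite R_card t_mod p_size; apply: extendable_pendant_path.
move=> l0; exists [:: l0 z] => // xs xs_size; rewrite p_fst p_snd map_rcons -cats1.
have [s_uniq _ _] := s_path.
rewrite extend_out; last by move: s_uniq; rewrite -cat_cons cat_uniq => /and3P[_ /hasPn zN _]; apply: zN; rewrite mem_head.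
have xvs_uniq : uniq (x :: vs) by move: s_uniq; rewrite -cat_cons cat_uniq => /and3P[].
have xvs_size : size xs = size (x :: vs) by rewrite xs_size p_size /= vs_size.
congr (pendant_labels _ (_ ++ _)).
by rewrite -[in RHS](map_extend l0 xvs_uniq xvs_size).
Qed.

Lemma three_leaves_case p : star U p -> size p = 3 -> #|U| %% 4 = 0 -> cordial_on U.
Proof.
move=> p_star p_size U_mod; have p_peel := star_peel p_star.
have R_card : #|rest U p| + 3 = #|U| by rewrite (card_rest p_peel) p_size.
have R_conn := connected_rest U_conn p_peel.
have [||| [s s_path s_size] | R_cordial] := IH (R := rest U p) => //; try lia.
  have s5 : size s = 5.
    by move: s_size; rewrite -(card_induced_path s_path) !inE => /orP[]/eqP; lia.
  have s_nil : s != [::] by rewrite -size_eq0 s5.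
  apply: (cordial_on_star_on_path p_star s_path s_nil); rewrite s5.
  apply: path5_three_leaves_labelable; first by rewrite !size_map.
  apply/allP=> _ /mapP[w w_p ->]; rewrite -s5 index_mem -(mem_induced_path _ s_path).
  exact: star_rest.
apply: (cordial_on_star U_conn p_star) => //; first lia.
by rewrite p_size (_ : #|rest U p| %% 4 = 1); [apply: extendable_three_leaves | lia].
Qed.

End InductionStep.

Lemma exceptional_or_cordial_on U :
  connected_in U -> 0 < #|U| -> exceptional U \/ cordial_on U.
Proof.
have [n] := ubnP #|U|; elim: n U => // n IHn U /ltnSE U_le U_conn U_gt0.
have IH (R : {set T}) : #|R| < #|U| -> connected_in R -> 0 < #|R| ->
    exceptional R \/ cordial_on R.
  by move=> R_lt; apply: IHn; lia.
have [U_le1 | U_gt1] := leqP #|U| 1.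
  have /cards1P[x ->] : #|U| == 1 by rewrite eqn_leq U_le1.
  by right; apply: cordial_on_set1.
have [U_mod | U_mod] := eqVneq (#|U| %% 4) 0; last first.
  by have [v [w pvw]] := exists_pendant U_conn U_gt1; apply: leaf_case pvw U_mod.
have [[s s_path] | [p p_star p_size]] := path_or_star U_conn U_gt0.
  have s_card := card_induced_path s_path.
  have [s_le4 | s_gt4] := leqP (size s) 4.
    by left; exists s; rewrite // (_ : size s = 4) //; lia.
  right; case: s s_path s_card s_gt4 => [|x [|x2 [|x3 [|x4 [|x5 [|z t]]]]]] // s_path s_card _.
    by rewrite s_card in U_mod.
  apply: (pendant_path_case (vs := [:: x2; x3; x4; x5]) U_conn IH s_path) => //.
  by move: U_mod; rewrite s_card /=; lia.
right; apply: (three_leaves_case U_conn IH (star_take 3 p_star)) => //.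
by rewrite size_takel.
Qed.

End Tree.
Theorem theorem6p1 (T : finType) (e : rel T) :
  symmetric e -> irreflexive e -> is_tree e ->
  (cordial e Klein4 <-> (~ iso_path e 4 /\ ~ iso_path e 5)).
Proof.
move=> e_sym e_irr [T_gt0 e_conn e_acyclic]; split.
  move=> /cordial_on_setT T_cordial.
  suff no_iso n : n \in [:: 4; 5] -> ~ iso_path e n by split; apply: no_iso.
  move=> n_45 /iso_path_induced_path[s s_path s_size].
  by apply: (exceptional_not_cordial_on e_sym e_irr) T_cordial; exists s; rewrite ?s_size.
move=> [no_iso4 no_iso5]; apply/cordial_on_setT.
have [||//] := exceptional_or_cordial_on e_sym e_irr e_acyclic (connected_in_setT e_conn).
  by rewrite cardsT.
case=> -[//|x0 s] /induced_path_iso_path iso s_size.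
by move: s_size iso => /=; rewrite !inE => /orP[]/eqP->.
Qed.
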